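(* Let $n,d$ be positive integers, $\mathbf{c}\in\mathbb{Z}^n_+$, and $\mathbb{P}\subseteq[0,d]^n$ a bounded polyhedron with $\mathbb{P}\cap\mathbb{Z}^n\ne\emptyset$, and consider the lexicographic integer program of finding a lexicographically maximum element of $\mathbb{S}=\{(\mathbf{c}^\top\mathbf{x},x_1,\dots,x_n):\mathbf{x}\in\mathbb{P}\cap\mathbb{Z}^n\}$ (equivalently, an optimal solution of $\max\{\mathbf{c}^\top\mathbf{x}:\mathbf{x}\in\mathbb{P}\cap\mathbb{Z}^n\}$, ties broken lexicographically). Let $a_1=d$ and $a_k=d(1+\sum_{j=1}^{k-1}a_j)$ for $k\in\{2,\dots,n\}$. Consider the cutting plane algorithm: set $L_0=\{\mathbf{z}\in\mathbb{R}^{n+1}:(z_1,\dots,z_n)\in\mathbb{P},\ z_0=\sum_i c_iz_i\}$; at iteration $t=0,1,2,\dots$ let $\mathbf{z}_t^\star$ be a lexicographically maximum element of $L_t$; if $\mathbf{z}_t^\star$ is integral, stop and output it; otherwise generate the $n+1$ cuts $z_i+\sum_{j=0}^{i-1}a_{i-j}(z_j-\lceil(\mathbf{z}_t^\star)_j\rceil)\le\lfloor(\mathbf{z}_t^\star)_i\rfloor$, $i\in\{0,\dots,n\}$, select the cut with index $k=\min\{j:(\mathbf{z}_t^\star)_j\notin\mathbb{Z}\}$, and let $L_{t+1}$ be $L_t$ intersected with the half-space defined by that cut. Then this algorithm terminates after a finite number of iterations and outputs an optimal solution of the lexicographic integer program, i.e., a lexicographically maximum element of $\mathbb{S}$.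
   Context: Lexicographic order on $\mathbb{R}^{n+1}$: $\mathbf{x}<_L\mathbf{y}$ if there is $k\in\{0,\dots,n\}$ with $x_k<y_k$ and $x_i=y_i$ for all $i<k$; $\mathbf{x}\le_L\mathbf{y}$ means $\mathbf{x}<_L\mathbf{y}$ or $\mathbf{x}=\mathbf{y}$. A lexicographically maximum element of a set $T$ is some $\mathbf{t}\in T$ with $\mathbf{s}\le_L\mathbf{t}$ for all $\mathbf{s}\in T$. The rule of selecting the cut whose index is the first non-integral coordinate of the current LP solution is the paper's standing assumption on the learned cut selection policy (HEM/HEM++). *)

From HB Require Import structures.
From mathcomp Require Import all_boot all_order all_algebra.
From mathcomp Require Import reals.
Set Implicit Arguments. Unset Strict Implicit. Unset Printing Implicit Defensive.
Import Order.TTheory GRing.Theory Num.Theory.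
Local Open Scope ring_scope.

(* Vectors z = (z_0, z_1, ..., z_n) in R^(n+1) are functions 'I_n.+1 -> R;
   z_0 is index ord0 and z_i (i >= 1) is index lift ord0 (i-1). *)

Definition lex_lt (R : realType) (n : nat) (x y : 'I_n.+1 -> R) : Prop :=
  exists k : 'I_n.+1, x k < y k /\ (forall i : 'I_n.+1, (i < k)%N -> x i = y i).
Definition lex_le (R : realType) (n : nat) (x y : 'I_n.+1 -> R) : Prop :=
  lex_lt x y \/ x = y.
Definition lex_max (R : realType) (n : nat) (T : ('I_n.+1 -> R) -> Prop)
  (t : 'I_n.+1 -> R) : Prop :=
  T t /\ (forall s, T s -> lex_le s t).

Definition polyhedron (R : realType) (n m : nat) (A : 'I_m -> 'I_n -> R)
  (b : 'I_m -> R) (x : 'I_n -> R) : Prop :=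
  forall k : 'I_m, \sum_(i < n) A k i * x i <= b k.

(* asum d k = a_1 + ... + a_k ; a d k = a_k = d (1 + a_1 + ... + a_{k-1}) *)
Fixpoint asum (d k : nat) : nat :=
  match k with
  | 0 => 0
  | k'.+1 => asum d k' + d * (1 + asum d k')
  end.
Definition acoef (d k : nat) : nat := d * (1 + asum d k.-1).

Definition L0 (R : realType) (n : nat) (P : ('I_n -> R) -> Prop) (c : 'I_n -> int)
  (z : 'I_n.+1 -> R) : Prop :=
  P (fun i => z (lift ord0 i)) /\ z ord0 = \sum_(i < n) (c i)%:~R * z (lift ord0 i).

Definition Sset (R : realType) (n : nat) (P : ('I_n -> R) -> Prop) (c : 'I_n -> int)
  (s : 'I_n.+1 -> R) : Prop :=
  exists x : 'I_n -> int, P (fun i => (x i)%:~R) /\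
    s ord0 = ((\sum_(i < n) c i * x i)%R)%:~R /\
    (forall i : 'I_n, s (lift ord0 i) = (x i)%:~R).

Definition integral_vec (R : realType) (n : nat) (z : 'I_n.+1 -> R) : Prop :=
  forall i, z i \is a Num.int.

Definition cut (R : realType) (n d : nat) (i : 'I_n.+1) (zs : 'I_n.+1 -> R)
  (z : 'I_n.+1 -> R) : Prop :=
  z i + \sum_(j < n.+1 | (j < i)%N) (acoef d (i - j))%:R * (z j - (Num.ceil (zs j))%:~R)
  <= (Num.floor (zs i))%:~R.

Definition algorithm_run (R : realType) (n d : nat) (P : ('I_n -> R) -> Prop)
  (c : 'I_n -> int) (T : nat) (L : nat -> ('I_n.+1 -> R) -> Prop)
  (z : nat -> 'I_n.+1 -> R) : Prop :=
  (forall w, L 0%N w <-> L0 P c w) /\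
  (forall t, (t <= T)%N -> lex_max (L t) (z t)) /\
  (forall t, (t < T)%N ->
     exists k : 'I_n.+1,
       ~ (z t k \is a Num.int) /\
       (forall j : 'I_n.+1, (j < k)%N -> z t j \is a Num.int) /\
       (forall w, L t.+1 w <-> (L t w /\ cut d k (z t) w))) /\
  integral_vec (z T).

From HB Require Import structures.
From mathcomp Require Import all_boot all_order all_algebra.
From mathcomp Require Import reals.
From mathcomp Require Import boolp classical_sets topology normedtype derive.
From mathcomp Require Import lra zify.
Import Order.TTheory GRing.Theory Num.Theory.
Import numFieldTopology.Exports numFieldNormedType.Exports.
Set Implicit Arguments.
Unset Strict Implicit.
Unset Printing Implicit Defensive.

Local Open Scope classical_set_scope.
Local Open Scope ring_scope.

(* The relaxations L_t are compact, so each has a lexicographic maximum z*_t.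
   Every point s of S that is lexicographically below z*_t satisfies the cut:
   if s first drops below z*_t at a coordinate l before the selected index k,
   then s_l <= z*_l - 1, and the weight a_{k-l} of this deficit outweighs all
   that the coordinates after l, each at most d, can gain.  Hence S stays inside
   every L_t and z*_t decreases lexicographically.  Termination goes coordinate
   by coordinate: once z*_0, ..., z*_(j-1) have settled to integers, every cut
   is on coordinate j and pushes it down to its floor, so the nonnegative
   integer ceil z*_j drops whenever z*_j is fractional and z*_j settles to an
   integer.  The final z*_T is an integral point of L_0, i.e. a point of S that
   dominates S. *)

Lemma sum_acoef d k m : (m <= k)%N ->
  (\sum_(m <= i < k) acoef d (k - i) = asum d (k - m))%N.
Proof.
move=> mk; have [p] := ubnP (k - m); elim: p m mk => [|p IH] m mk hp //.
have [->|mk'] := eqVneq m k; first by rewrite big_geq // subnn.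
have mltk : (m < k)%N by rewrite ltn_neqAle mk' mk.
rewrite big_ltn // IH //; last by lia.
have -> : (k - m = (k - m.+1).+1)%N by lia.
by rewrite /acoef /= addnC.
Qed.

(* The recurrence a_(k-l) = d + d (a_1 + ... + a_(k-l-1)) makes a deficit of 1
   at coordinate l offset gains of d at each later coordinate and at z_k. *)
Lemma acoef_weighted_sum_le0 (R : realType) (d k l : nat) (f : nat -> R) :
  (l < k)%N -> (forall i, (i < l)%N -> f i = 0) -> f l <= -1 ->
  (forall i, (l < i < k)%N -> f i <= d%:R) ->
  d%:R + \sum_(0 <= i < k) (acoef d (k - i))%:R * f i <= 0.
Proof.
move=> lk f0 fl fd.
rewrite (@big_cat_nat _ _ _ l) //=; last exact: ltnW.
rewrite big_nat_cond big1 ?add0r; last first.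
  by move=> i /andP[/andP[_ il] _]; rewrite f0 ?mulr0.
rewrite big_ltn //.
have lead : (acoef d (k - l))%:R * f l <= - (acoef d (k - l))%:R.
  by rewrite -mulrN1 ler_wpM2l.
have tail : \sum_(l.+1 <= i < k) (acoef d (k - i))%:R * f i <=
    (d * asum d (k - l.+1))%N%:R :> R.
  rewrite -(sum_acoef d lk) mulnC natrM natr_sum mulr_suml.
  by apply: ler_sum_nat => i ilk; rewrite ler_wpM2l // fd.
have acoefE : (acoef d (k - l))%:R = d%:R + (d * asum d (k - l.+1))%N%:R :> R.
  by rewrite -natrD /acoef -subn1 -subnDA addn1 mulnDr muln1.
lra.
Qed.

Section Continuity.
Variables (T : topologicalType) (K : numFieldType) (V : normedModType K).

Lemma continuous_sum (I : Type) (r : seq I) (P : pred I) (F : I -> T -> V) :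
  (forall i, continuous (F i)) -> continuous (fun x => \sum_(i <- r | P i) F i x).
Proof.
move=> Fc; elim: r => [|a r IH].
  by under eq_fun do rewrite big_nil; exact: cst_continuous.
under eq_fun do rewrite big_cons.
by case: (P a) => // x; apply: continuousD; [exact: Fc | exact: IH].
Qed.

Lemma continuous_prod_topology (I : Type) (X : I -> topologicalType)
    (f : T -> prod_topology X) :
  (forall i, continuous (fun x => f x i)) -> continuous f.
Proof.
move=> fc x; apply/cvg_sup => i A /=.
rewrite nbhsE /= => -[B [[C Cop <-] Bfx] BA].
have := fc i x C (open_nbhs_nbhs (conj Cop Bfx)).
by rewrite nbhsE => -[D Dx DC]; exists D => // y /DC /BA.
Qed.

End Continuity.

Lemma coord_continuous {I : eqType} {X : topologicalType} (i : I) :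
  continuous (fun z : {ptws I -> X} => z i).
Proof. exact: (@proj_continuous _ (fun _ => X) i). Qed.
Arguments coord_continuous {I X} i.

Section RealFunctions.
Variables (T : topologicalType) (R : realType).

Lemma continuous_mull (a : R) (f : T -> R) : continuous f -> continuous (fun x => a * f x).
Proof. by move=> fc x; apply: continuousM; [exact: cst_continuous | exact: fc]. Qed.

Lemma closed_fun_le (f g : T -> R) : continuous f -> continuous g ->
  closed [set x | f x <= g x].
Proof.
move=> fc gc; rewrite (_ : mkset _ = (fun x => f x - g x) @^-1` [set r | r <= 0]).
  apply: preimage_closed; last exact: closed_le.
  by move=> x _; apply: continuousB; [exact: fc | exact: gc].
by rewrite predeqE => x /=; rewrite subr_le0.
Qed.

Lemma closed_fun_eq (f g : T -> R) : continuous f -> continuous g ->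
  closed [set x | f x = g x].
Proof.
move=> fc gc; rewrite (_ : mkset _ = [set x | f x <= g x] `&` [set x | g x <= f x]).
  by apply: closedI; apply: closed_fun_le.
rewrite predeqE => x /=; split=> [->|[fg gf]]; first by split.
by apply/eqP; rewrite eq_le fg gf.
Qed.

End RealFunctions.

Section LexicographicMaximum.
Variables (R : realType) (n : nat).
Notation V := {ptws 'I_n.+1 -> R}.

Lemma lex_le_prefix (x y : 'I_n.+1 -> R) (j : 'I_n.+1) : lex_le x y ->
  (forall i : 'I_n.+1, (i < j)%N -> x i = y i) -> x j <= y j.
Proof.
case=> [[k [xyk xyE]] xyj|-> //].
have [kj|jk|/val_inj <-] := ltngtP k j; last exact: ltW.
- by move: xyk; rewrite xyj // ltxx.
- by rewrite xyE.
Qed.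

(* [F] consists of the points of [K] that are lexicographically maximal in their
   first [j] coordinates. *)
Definition lex_top (K F : set V) (j : nat) : Prop :=
  [/\ F `<=` K,
      forall t1 t2, F t1 -> F t2 -> forall i : 'I_n.+1, (i < j)%N -> t1 i = t2 i &
      forall s t, K s -> F t -> F s \/
        exists k : 'I_n.+1, [/\ (k < j)%N, s k < t k & forall i : 'I_n.+1, (i < k)%N -> s i = t i]].

Lemma lex_top_succ (K F : set V) (J : 'I_n.+1) : compact F -> F !=set0 ->
  lex_top K F J -> exists F', [/\ compact F', F' !=set0 & lex_top K F' J.+1].
Proof.
move=> cF F0 [FK Feq Ftop].
have [x /set_mem Fx xmax] := compact_EVT_max F0 cF
  (continuous_subspaceT (coord_continuous J)).
exists (F `&` [set z | z J = x J]); split; last split.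
- by apply: compact_closedI => //; apply: closed_fun_eq;
    [exact: coord_continuous | exact: cst_continuous].
- by exists x.
- by move=> z [/FK].
- move=> t1 t2 [Ft1 t1J] [Ft2 t2J] i; rewrite ltnS leq_eqVlt.
  case/predU1P => [/val_inj ->|iJ]; [by rewrite t1J t2J | exact: Feq].
- move=> s t Ks [Ft tJ]; have [Fs|[k [kJ skt sktE]]] := Ftop s t Ks Ft; last first.
    by right; exists k; split => //; apply: ltnW.
  have := xmax s (mem_set Fs); rewrite le_eqVlt => /predU1P[sJ|sJ]; first by left.
  by right; exists J; split; rewrite ?tJ // => i iJ; apply: Feq.
Qed.

Lemma compact_lex_max (K : set V) : compact K -> K !=set0 -> exists t, lex_max K t.
Proof.
move=> cK K0.
have top j : (j <= n.+1)%N -> exists F, [/\ compact F, F !=set0 & lex_top K F j].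
  elim: j => [_|j IH jn]; first by exists K; split=> //; split=> // s t Ks; left.
  by have [F [cF F0 /(@lex_top_succ _ _ (Ordinal jn) cF F0)]] := IH (ltnW jn).
have [F [_ [t Ft] [FK Feq Ftop]]] := top n.+1 (leqnn _).
exists t; split => [|s Ks]; first exact: FK.
have [Fs|[k [_ skt sktE]]] := Ftop s t Ks Ft; last by left; exists k.
by right; apply/funext => i; apply: Feq.
Qed.

Lemma compact_ptws_box (M : R) : compact [set z : V | forall i, 0 <= z i <= M].
Proof.
have := @tychonoff _ (fun _ : 'I_n.+1 => R) (fun _ => `[0, M]%classic)
  (fun _ => @segment_compact R 0 M).
by congr compact.
Qed.

End LexicographicMaximum.
Arguments compact_ptws_box {R n} M.

Lemma nonincreasing_nat_stabilizes (N : nat -> nat) : (forall t, N t.+1 <= N t)%N ->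
  exists t1, forall t, (t1 <= t)%N -> N t = N t1.
Proof.
move=> Ndec; have Nhomo : {homo N : s t / (s <= t)%N >-> (t <= s)%N}.
  by apply: homo_leq => // ? ? ? /[swap]; apply: leq_trans.
have Nval : exists v, `[< exists t, N t = v >] by exists (N 0); apply/asboolP; exists 0%N.
case: (ex_minnP Nval) => v /asboolP [t1 Nt1] vmin.
exists t1 => t t1t; apply/eqP; rewrite eqn_leq Nhomo // Nt1 vmin //.
by apply/asboolP; exists t.
Qed.

Lemma floor_descent_stabilizes (R : realType) (u : nat -> R) :
  (forall t, 0 <= u t) -> (forall t, u t.+1 <= u t) ->
  (forall t, u t \isn't a Num.int -> u t.+1 <= (Num.floor (u t))%:~R) ->
  exists t1, forall t, (t1 <= t)%N -> u t = u t1 /\ u t \is a Num.int.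
Proof.
move=> u0 udec ufloor.
have ceil0 t : 0 <= Num.ceil (u t) by rewrite ceil_ge0 (lt_le_trans _ (u0 t)) ?ltrN10.
have Ndec t : (`|Num.ceil (u t.+1)| <= `|Num.ceil (u t)|)%N.
  by rewrite -lez_nat !gez0_abs // le_ceil.
have [t1 Nconst] := nonincreasing_nat_stabilizes Ndec.
have ceil_const t : (t1 <= t)%N -> Num.ceil (u t) = Num.ceil (u t1).
  by move=> /Nconst /(congr1 Posz); rewrite !gez0_abs.
have uint t : (t1 <= t)%N -> u t \is a Num.int.
  move=> t1t; apply: contraT => ufrac.
  have := ceil_le_int (u t.+1) (Num.floor (u t)); rewrite ufloor //.
  by rewrite ceil_const 1?leqW // -(ceil_const _ t1t) ceil_floor ufrac gerDl.
exists t1 => t t1t; split; last exact: uint.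
by rewrite -(ceilK (uint _ t1t)) -(ceilK (uint _ (leqnn _))) ceil_const.
Qed.

Lemma int_num_ltD1 (R : archiNumDomainType) (x y : R) :
  x \is a Num.int -> y \is a Num.int -> x < y -> x + 1 <= y.
Proof. by move=> /intrP[a ->] /intrP[b ->]; rewrite ltr_int -lezD1 -(ler_int R) intrD. Qed.

Section FirstFractional.
Variables (R : realType) (n : nat).
Implicit Types (z : 'I_n.+1 -> R) (k : 'I_n.+1).

Definition first_fractional z k : bool :=
  (z k \isn't a Num.int) && [forall j : 'I_n.+1, (j < k)%N ==> (z j \is a Num.int)].

Lemma first_fractionalP z k : reflect
  (z k \isn't a Num.int /\ forall j : 'I_n.+1, (j < k)%N -> z j \is a Num.int)
  (first_fractional z k).
Proof.
apply: (iffP andP) => -[zk zj]; split => //; first by move=> j /(implyP (forallP zj j)).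
by apply/forallP => j; apply/implyP/zj.
Qed.

Lemma first_fractional_uniq z k1 k2 :
  first_fractional z k1 -> first_fractional z k2 -> k1 = k2.
Proof.
move=> /first_fractionalP[z1 pre1] /first_fractionalP[z2 pre2].
have [/pre2|/pre1|/val_inj //] := ltngtP k1 k2; first by rewrite (negbTE z1).
by rewrite (negbTE z2).
Qed.

Lemma integral_vecP z : integral_vec z <-> [pick k | first_fractional z k] = None.
Proof.
split=> [zint|]; first by case: pickP => // k /andP[]; rewrite zint.
case: pickP => // none _ i; apply: contraT => zi.
case: (@arg_minnP _ i (fun k => z k \isn't a Num.int) val zi) => k zk kmin.
rewrite -(none k); apply/first_fractionalP; split=> // j jk.
by apply: contraT => /kmin; rewrite leqNgt jk.
Qed.

End FirstFractional.

Lemma sum_ord_ltn (V : nmodType) (n k : nat) (F : 'I_n.+1 -> V) : (k <= n.+1)%N ->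
  \sum_(j < n.+1 | (j < k)%N) F j = \sum_(0 <= i < k) F (inord i).
Proof.
move=> kn; rewrite big_mkord (big_ord_widen _ (fun i => F (inord i)) kn).
by apply: eq_bigr => i _; rewrite inord_val.
Qed.

Section Cuts.
Variables (R : realType) (n d : nat).
Implicit Types (k : 'I_n.+1) (zs z : 'I_n.+1 -> R).

Lemma cut_prefixE k zs z :
  (forall j : 'I_n.+1, (j < k)%N -> z j = zs j /\ zs j \is a Num.int) ->
  cut d k zs z <-> z k <= (Num.floor (zs k))%:~R.
Proof.
move=> pre; rewrite /cut big1 ?addr0 // => j /pre[-> /ceilK ->].
by rewrite subrr mulr0.
Qed.

Lemma closed_cut k zs : closed (cut d k zs : set {ptws 'I_n.+1 -> R}).
Proof.
apply: closed_fun_le; last exact: cst_continuous.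
move=> z; apply: continuousD; first exact: coord_continuous.
apply: continuous_sum => j; apply: continuous_mull => {}z.
by apply: continuousB; [exact: coord_continuous | exact: cst_continuous].
Qed.

End Cuts.

Section CuttingPlaneRun.
Variables (R : realType) (n d : nat) (P : set {ptws 'I_n -> R}) (c : 'I_n -> int).
Hypotheses (c_ge0 : forall i, 0 <= c i) (P_closed : closed P)
  (P_cube : forall x, P x -> forall i, 0 <= x i <= d%:R)
  (P_int : exists x : 'I_n -> int, P (fun i => (x i)%:~R)).
Notation V := {ptws 'I_n.+1 -> R}.

Lemma L0_ge0 z : L0 P c z -> forall i, 0 <= z i.
Proof.
case=> Pz z0 i; case: (unliftP ord0 i) => [j ->|->]; first by case/andP: (P_cube Pz j).
rewrite z0 sumr_ge0 // => j _; rewrite mulr_ge0 ?ler0z //.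
by case/andP: (P_cube Pz j).
Qed.

Lemma L0_le_d z i : L0 P c z -> i != ord0 -> z i <= d%:R.
Proof.
case=> Pz _; case: (unliftP ord0 i) => [j ->|->]; last by rewrite eqxx.
by case/andP: (P_cube Pz j).
Qed.

Lemma L0_in_box z : L0 P c z -> forall i, 0 <= z i <= d%:R * (1 + \sum_(j < n) (c j)%:~R).
Proof.
move=> Lz i; rewrite L0_ge0 //=.
have c_sum_ge0 : 0 <= \sum_(j < n) (c j)%:~R :> R by rewrite sumr_ge0 // => j; rewrite ler0z.
have [->|i0] := eqVneq i ord0; last first.
  by rewrite (le_trans (L0_le_d Lz i0)) // ler_peMr // lerDl.
case: Lz => Pz ->; rewrite mulrDr mulr1 mulr_sumr -[X in X <= _]add0r lerD //.
apply: ler_sum => j _; rewrite mulrC ler_wpM2r ?ler0z //.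
by case/andP: (P_cube Pz j).
Qed.

Lemma closed_L0 : closed (L0 P c : set V).
Proof.
have tail_cont : continuous (fun z : V => (fun i => z (lift ord0 i)) : {ptws 'I_n -> R}).
  by apply: continuous_prod_topology => i; exact: coord_continuous.
rewrite (_ : L0 P c = (fun z : V => fun i => z (lift ord0 i)) @^-1` P `&`
    [set z : V | z ord0 = \sum_(i < n) (c i)%:~R * z (lift ord0 i)]) //.
apply: closedI; first exact: preimage_closed (fun z _ => tail_cont z) P_closed.
apply: closed_fun_eq; first exact: coord_continuous.
by apply: continuous_sum => i; apply: continuous_mull; exact: coord_continuous.
Qed.

Lemma compact_L0 : compact (L0 P c : set V).
Proof.
apply: subclosed_compact closed_L0 (compact_ptws_box _) _.
exact: L0_in_box.
Qed.

Lemma SsetP s : Sset P c s <-> integral_vec s /\ L0 P c s.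
Proof.
split=> [[x [Px [s0 sx]]]|[sint [Ps s0]]].
  split=> [i|]; first by case: (unliftP ord0 i) => [j ->|->]; rewrite ?sx ?s0 intr_int.
  split; first by rewrite (_ : (fun i => _) = (fun i => (x i)%:~R)) //; apply/funext => i.
  by rewrite s0 rmorph_sum; apply: eq_bigr => i _; rewrite sx rmorphM.
have sK i : (Num.floor (s (lift ord0 i)))%:~R = s (lift ord0 i) by rewrite floorK.
exists (fun i => Num.floor (s (lift ord0 i))); split.
  by rewrite (_ : (fun i => _) = (fun i => s (lift ord0 i))) //; apply/funext => i.
split=> // ; rewrite s0 rmorph_sum; apply: eq_bigr => i _.
by rewrite rmorphM /= sK.
Qed.

Lemma Sset_nonempty : Sset P c !=set0.
Proof.
have [x Px] := P_int.
exists (fun i => if unlift ord0 i is Some j then (x j)%:~R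
                 else (\sum_(j < n) c j * x j)%:~R).
by exists x; rewrite unlift_none; split=> //; split=> // i; rewrite liftK.
Qed.

Lemma cut_valid s zs k : integral_vec s -> L0 P c s -> L0 P c zs -> lex_le s zs ->
  first_fractional zs k -> cut d k zs s.
Proof.
move=> sint Ls Lzs slez /first_fractionalP[zk zE].
case: (slez) => [[l [slt sE]]|zs_s]; last by rewrite -zs_s sint in zk.
have [lk|kl] := ltnP l k; last first.
  apply/cut_prefixE => [j jk|]; first by rewrite sE ?zE // (leq_trans jk kl).
  have := lex_le_prefix slez (fun i ik => sE i (leq_trans ik kl)).
  by case/intrP: (sint k) => a ->; rewrite ler_int floor_ge_int.
have kn : (k <= n.+1)%N := ltnW (ltn_ord k).
pose f i := s (inord i) - (Num.ceil (zs (inord i)))%:~R.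
have f0 i : (i < l)%N -> f i = 0.
  move=> il; have iln : (i < n.+1)%N := ltn_trans il (ltn_ord l).
  by rewrite /f sE ?inordK // ceilK ?subrr // zE // inordK // (ltn_trans il).
have fl : f l <= -1.
  rewrite /f inord_val ceilK ?zE //.
  have := int_num_ltD1 (sint l) (zE _ lk) slt; lra.
have fd i : (l < i < k)%N -> f i <= d%:R.
  case/andP=> li ik; have ikn : (i < n.+1)%N := leq_trans ik kn.
  have sd : s (inord i) <= d%:R.
    by apply: L0_le_d Ls _; rewrite -val_eqE /= inordK // -lt0n (leq_ltn_trans _ li).
  have ceil0 : 0 <= (Num.ceil (zs (inord i)))%:~R :> R.
    by rewrite ler0z ceil_ge0 (lt_le_trans _ (L0_ge0 Lzs _)) ?ltrN10.
  by rewrite /f lerBlDr (le_trans sd) // lerDl.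
have := acoef_weighted_sum_le0 lk f0 fl fd.
rewrite /cut sum_ord_ltn //.
have -> : \sum_(0 <= i < k) (acoef d (k - @inord n i))%:R *
    (s (inord i) - (Num.ceil (zs (inord i)))%:~R) = \sum_(0 <= i < k) (acoef d (k - i))%:R * f i.
  by apply: eq_big_nat => i /andP[_ ik]; rewrite inordK // (leq_trans ik kn).
have sk : s k <= d%:R by apply: L0_le_d Ls _; rewrite -val_eqE -lt0n (leq_ltn_trans _ lk).
have floor0 : 0 <= (Num.floor (zs k))%:~R :> R by rewrite ler0z floor_ge0 L0_ge0.
lra.
Qed.

(* [relax t] and [zstar t] are L_t and z*_t; [lexmax_of L] is a junk value when [L]
   has no lexicographic maximum, which [lexmax_ofP] rules out along the run. *)
Definition lexmax_of (L : set ('I_n.+1 -> R)) : 'I_n.+1 -> R := xget (fun=> 0) (lex_max L).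

Definition refine (L : set ('I_n.+1 -> R)) : set ('I_n.+1 -> R) :=
  if [pick k | first_fractional (lexmax_of L) k] is Some k
  then L `&` cut d k (lexmax_of L) else L.

Definition relax (t : nat) : set ('I_n.+1 -> R) := iter t refine (L0 P c).

Definition zstar (t : nat) : 'I_n.+1 -> R := lexmax_of (relax t).

Lemma lexmax_ofP (L : set V) : closed L -> L `<=` L0 P c -> Sset P c `<=` L ->
  lex_max L (lexmax_of L).
Proof.
move=> Lclosed LL0 SL; apply: xgetPex; apply: compact_lex_max.
  exact: subclosed_compact Lclosed compact_L0 LL0.
by have [s Ss] := Sset_nonempty; exists s; apply: SL.
Qed.

Lemma relaxS t : relax t.+1 = refine (relax t).
Proof. exact: iterS. Qed.

Lemma relax_sub t : relax t.+1 `<=` relax t.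
Proof. by rewrite relaxS /refine; case: pickP => [k _ w []|_ w]. Qed.

Lemma relax_invariant t :
  [/\ closed (relax t : set V), relax t `<=` L0 P c & Sset P c `<=` relax t].
Proof.
elim: t => [|t [Lclosed LL0 SL]].
  by split; [exact: closed_L0 | by [] | by move=> s /SsetP[]].
have Lmax := lexmax_ofP Lclosed LL0 SL.
rewrite relaxS /refine; case: pickP => // k kfrac.
split; [by apply: closedI => //; exact: closed_cut | by move=> w [/LL0] |].
move=> s Ss; split; first exact: SL.
have /SsetP[sint Ls] := Ss.
exact: cut_valid sint Ls (LL0 _ Lmax.1) (Lmax.2 _ (SL _ Ss)) kfrac.
Qed.

Lemma zstar_lex_max t : lex_max (relax t) (zstar t).
Proof. by have [] := relax_invariant t; apply: lexmax_ofP. Qed.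

Lemma zstar_L0 t : L0 P c (zstar t).
Proof. by have [_ LL0 _] := relax_invariant t; apply/LL0/(zstar_lex_max t).1. Qed.

Lemma zstar_lex_le t : lex_le (zstar t.+1) (zstar t).
Proof. exact: (zstar_lex_max t).2 _ (relax_sub (zstar_lex_max t.+1).1). Qed.

Lemma relax_cut t k : first_fractional (zstar t) k ->
  forall w, relax t.+1 w <-> relax t w /\ cut d k (zstar t) w.
Proof.
move=> kfrac w; rewrite relaxS /refine -/(zstar t).
case: pickP => [k' /first_fractional_uniq/(_ kfrac) -> //|/(_ k)].
by rewrite kfrac.
Qed.

Definition settled_from (j t0 : nat) : Prop := forall t, (t0 <= t)%N ->
  forall i : 'I_n.+1, (i < j)%N -> zstar t i = zstar t0 i /\ zstar t i \is a Num.int.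

Lemma settled_from_succ (J : 'I_n.+1) t0 : settled_from J t0 -> exists t1, settled_from J.+1 t1.
Proof.
move=> st.
have pre t : (t0 <= t)%N ->
    forall i : 'I_n.+1, (i < J)%N -> zstar t.+1 i = zstar t i /\ zstar t i \is a Num.int.
  move=> t0t i iJ; have [-> _] := st _ (leqW t0t) i iJ.
  by have [-> ->] := st _ t0t i iJ.
pose u s := zstar (t0 + s) J.
have u_ge0 s : 0 <= u s by exact: L0_ge0 (zstar_L0 _) J.
have u_dec s : u s.+1 <= u s.
  rewrite /u addnS; apply: (lex_le_prefix (zstar_lex_le (t0 + s))) => i.
  by move=> iJ; have [] := pre _ (leq_addr s t0) i iJ.
have u_floor s : u s \isn't a Num.int -> u s.+1 <= (Num.floor (u s))%:~R.
  move=> us_frac; have pre_s := pre _ (leq_addr s t0).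
  rewrite /u addnS; apply/(cut_prefixE _ pre_s).
  have Jfrac : first_fractional (zstar (t0 + s)) J.
    by apply/first_fractionalP; split=> // i /pre_s[].
  exact: ((relax_cut Jfrac _).1 (zstar_lex_max _).1).2.
have [s1 ust] := floor_descent_stabilizes u_ge0 u_dec u_floor.
exists (t0 + s1)%N => t t1t i; rewrite ltnS leq_eqVlt => /predU1P[iJ|iJ].
  have t0t : (t0 <= t)%N := leq_trans (leq_addr s1 t0) t1t.
  rewrite (_ : i = J); last exact: val_inj.
  by have := ust (t - t0)%N; rewrite /u subnKC //; apply; lia.
have [-> ->] := st _ (leq_trans (leq_addr _ _) t1t) i iJ.
by have [->] := st _ (leq_addr s1 t0) i iJ.
Qed.

Lemma zstar_eventually_integral : exists t, integral_vec (zstar t).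
Proof.
suff settled j : (j <= n.+1)%N -> exists t0, settled_from j t0.
  by have [t0 st] := settled _ (leqnn _); exists t0 => i; have [] := st _ (leqnn _) i (ltn_ord i).
elim: j => [|j IH] jn; first by exists 0%N.
have [t0 st] := IH (ltnW jn).
exact: (@settled_from_succ (Ordinal jn) t0 st).
Qed.

Lemma cutting_plane_terminates : exists T L z,
  algorithm_run d P c T L z /\ lex_max (Sset P c) (z T).
Proof.
have stops : exists t, [pick k | first_fractional (zstar t) k] == None.
  by have [t /integral_vecP zint] := zstar_eventually_integral; exists t; rewrite zint.
case: (ex_minnP stops) => T /eqP /integral_vecP Tint Tmin.
exists T, relax, zstar; split.
  split=> //; split; first by move=> t _; exact: zstar_lex_max.
  split=> // t tT.
  have : [pick k | first_fractional (zstar t) k] != None.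
    by apply: contraL tT => /Tmin; rewrite -leqNgt.
  case: pickP => // k kfrac _; have /first_fractionalP[zk zE] := kfrac.
  by exists k; split; [exact/negP | split; [exact: zE | exact: relax_cut]].
split; first by apply/SsetP; split=> //; exact: zstar_L0.
by move=> s Ss; have [_ _ /(_ s Ss) LTs] := relax_invariant T; exact: (zstar_lex_max T).2.
Qed.

End CuttingPlaneRun.

Lemma closed_polyhedron (R : realType) (n m : nat) (A : 'I_m -> 'I_n -> R) (b : 'I_m -> R) :
  closed (polyhedron A b : set {ptws 'I_n -> R}).
Proof.
rewrite (_ : polyhedron A b = \bigcap_(k in setT)
    [set x : {ptws 'I_n -> R} | \sum_(i < n) A k i * x i <= b k]).
  apply: closed_bigI => k _; apply: closed_fun_le; last exact: cst_continuous.
  by apply: continuous_sum => i; apply: continuous_mull; exact: coord_continuous.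
by rewrite predeqE => x; split=> [Px k _|Px k]; apply: Px.
Qed.

Theorem theorem1 (R : realType) (n d m : nat) (c : 'I_n -> int)
  (A : 'I_m -> 'I_n -> R) (b : 'I_m -> R) :
  (0 < n)%N -> (0 < d)%N ->
  (forall i, 0 <= c i) ->
  (forall x, polyhedron A b x -> forall i, 0 <= x i <= d%:R) ->
  (exists x : 'I_n -> int, polyhedron A b (fun i => (x i)%:~R)) ->
  exists (T : nat) (L : nat -> ('I_n.+1 -> R) -> Prop) (z : nat -> 'I_n.+1 -> R),
    algorithm_run d (polyhedron A b) c T L z /\
    lex_max (Sset (polyhedron A b) c) (z T).
Proof.
move=> _ _ c_ge0 P_cube P_int.
exact: cutting_plane_terminates c_ge0 (@closed_polyhedron R n m A b) P_cube P_int.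
Qed.
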